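(* Let $\alpha>0$, $\sigma>0$, and let $\partial^-$ be the linear operator on $\mathbb C[z]$ defined by $\partial^-c_n=nc_{n-1}$ ($n\in\mathbb N_0$, with $c_{-1}:=0$). Then $\partial^-$, regarded as a densely defined operator in $L^2(\alpha\mathbb N_0,\pi_{\alpha,\sigma})$, is closable. Denoting its closure again by $\partial^-$, for each $z\in\mathbb C$ the coherent state $\mathcal E(\cdot,z)$ belongs to the domain of $\sigma\partial^-$ and is an eigenfunction of $\sigma\partial^-$ with eigenvalue $z$ (equivalently, an eigenfunction of $\partial^-$ with eigenvalue $z/\sigma$).
   Context: Let $\pi_{\alpha,\sigma}=\exp(-\sigma/\alpha^2)\sum_{n\ge0}\frac{1}{n!}(\sigma/\alpha^2)^n\delta_{\alpha n}$ on $\alpha\mathbb N_0$ ($\delta_y$ the Dirac measure at $y$), and let $(c_n)_{n\ge0}$ be the monic polynomial sequence orthogonal with respect to $\pi_{\alpha,\sigma}$, with generating function $\sum_{n\ge0}\frac{t^n}{n!}c_n(z)=\exp\big(\frac z\alpha\log(1+t\alpha)-\frac{\sigma t}{\alpha}\big)$; one has $\|c_n\|^2_{L^2(\alpha\mathbb N_0,\pi_{\alpha,\sigma})}=n!\sigma^n$ and polynomials are dense in $L^2(\alpha\mathbb N_0,\pi_{\alpha,\sigma})$. For $z\in\mathbb C$, the coherent state is $\mathcal E(x,z)=\sum_{n\ge0}\frac{z^n}{n!\sigma^n}c_n(x)$ for $x\in\alpha\mathbb N_0$; explicitly $\mathcal E(\alpha n,z)=(1+\alpha z/\sigma)^n\exp(-z/\alpha)$.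 *)

From HB Require Import structures.
From mathcomp Require Import all_boot all_order all_algebra.
From mathcomp Require Import all_classical all_reals all_analysis.
From mathcomp Require Import complex.
Set Implicit Arguments. Unset Strict Implicit. Unset Printing Implicit Defensive.
Import Order.TTheory GRing.Theory Num.Theory.
Local Open Scope ring_scope.
Local Open Scope complex_scope.
Import numFieldNormedType.Exports.
Local Open Scope classical_set_scope.

Section Charlier.
Variable R : realType.
Local Notation C := R[i].

Definition cexp (z : C) : C :=
  let: x +i* y := z in (expR x * cos y) +i* (expR x * sin y).

Definition cabs2 (z : C) : R := let: a +i* b := z in a ^+ 2 + b ^+ 2.

Variables alpha sigma : R.

Definition spar : R := sigma / alpha ^+ 2.

(* weight pi_{alpha,sigma}({alpha n}) = exp(-s) s^n / n! *)
Definition weight (n : nat) : R := expR (- spar) * spar ^+ n / (n`!)%:R.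

(* c_n(x): coefficient of t^n/n! in
   exp((x/alpha) log(1 + t alpha) - sigma t / alpha)
   = (1 + t alpha)^(x/alpha) * exp(- sigma t / alpha), i.e.
   c_n(x) = sum_k C(n,k) (prod_{j<k} (x - j alpha)) (-sigma/alpha)^(n-k). *)
Definition cpoly (n : nat) (x : C) : C :=
  \sum_(k < n.+1) ('C(n, k))%:R * (\prod_(j < k) (x - (j%:R * alpha)%:C))
                  * ((- (sigma / alpha))%:C) ^+ (n - k).

(* Functions on alpha N_0 are represented as sequences f : nat -> C,
   f n standing for the value at the point alpha * n. *)
Definition fun_on_grid := nat -> C.

Definition wnorm2 (f : fun_on_grid) : \bar R :=
  (\sum_(0 <= n <oo) ((weight n * cabs2 (f n))%:E))%E.

Definition inL2 (f : fun_on_grid) : Prop := (wnorm2 f < +oo)%E.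

Definition polyfun (a : seq C) : fun_on_grid :=
  fun n => \sum_(i < size a) a`_i * cpoly i ((alpha * n%:R)%:C).

(* partial^- applied to sum_i a_i c_i, i.e. sum_i a_i i c_{i-1},
   restricted to alpha N_0 (c_{-1} := 0; the i = 0 term vanishes) *)
Definition dminus_polyfun (a : seq C) : fun_on_grid :=
  fun n => \sum_(i < size a) a`_i * i%:R * cpoly i.-1 ((alpha * n%:R)%:C).

Definition in_graph_closure (f g : fun_on_grid) : Prop :=
  inL2 f /\ inL2 g /\
  exists a : nat -> seq C,
    (fun k => wnorm2 (fun n => polyfun (a k) n - f n)) @ \oo --> 0%E /\
    (fun k => wnorm2 (fun n => dminus_polyfun (a k) n - g n)) @ \oo --> 0%E.

(* closable: the closure of the graph is the graph of an operator *)
Definition dminus_closable : Prop :=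
  forall f g1 g2, in_graph_closure f g1 -> in_graph_closure f g2 -> g1 = g2.

Definition coherent (z : C) : fun_on_grid :=
  fun n => (1 + alpha%:C * z / sigma%:C) ^+ n * cexp (- z / alpha%:C).

End Charlier.

From HB Require Import structures.
From mathcomp Require Import all_boot all_order all_algebra.
From mathcomp Require Import all_classical all_reals all_analysis.
From mathcomp Require Import complex ring.
Set Implicit Arguments. Unset Strict Implicit. Unset Printing Implicit Defensive.
Import Order.TTheory GRing.Theory Num.Theory.
Import numFieldNormedType.Exports.
Local Open Scope ring_scope.
Local Open Scope complex_scope.
Local Open Scope classical_set_scope.

(* On the grid alpha N_0 the operator d^- is the forward difference
   f |-> (f (x + alpha) - f x) / alpha: the Charlier polynomials form an Appell
   sequence for it, being the binomial transform (with parameter -sigma/alpha)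
   of the falling factorials prod_(j < k) (x - j alpha).  All weights of
   pi_(alpha,sigma) are positive, so L^2-convergence implies pointwise
   convergence and every (f, g) in the closure of the graph satisfies
   g = (f (x + alpha) - f x) / alpha; this gives closability.
   Writing E(alpha n, z) = exp(-z/alpha) sum_k C(n, k) (alpha z / sigma)^k, the
   truncations of this sum are polynomials on the grid (inverting the binomial
   transform, alpha^k k! C(n, k) = sum_i C(k, i) (sigma/alpha)^(k-i) c_i(alpha n)).
   They, and their forward differences, are dominated by geometric sequences
   C rho^n, which are square-summable against the Poisson weights; dominated
   convergence then yields the approximation of (E, (z/sigma) E) in the graph. *)

Section DifferenceAppell.
Variable V : comPzRingType.
Implicit Types (h s u x : V) (p : nat -> V -> V).

Definition ffact h k x : V := \prod_(j < k) (x - j%:R * h).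

Definition binom_trans s p k x : V :=
  \sum_(i < k.+1) 'C(k, i)%:R * (p i x * s ^+ (k - i)).

Definition delta_appell h p :=
  forall k x, p k (x + h) - p k x = h * k%:R * p k.-1 x.

Lemma ffact_appell h : delta_appell h (ffact h).
Proof.
case=> [|k] x; first by rewrite /ffact !big_ord0 subrr mulr0 mul0r.
rewrite /ffact big_ord_recl big_ord_recr /=.
have -> : \prod_(i < k) (x + h - (bump 0 i)%:R * h) = \prod_(j < k) (x - j%:R * h).
  by apply: eq_bigr => i _; rewrite /bump add1n mulrSr mulrDl mul1r; ring.
ring.
Qed.

Lemma binom_trans_appell h s p : delta_appell h p -> delta_appell h (binom_trans s p).
Proof.
move=> Dp k x; rewrite /binom_trans -sumrB.
transitivity (\sum_(i < k.+1) 'C(k, i)%:R * (h * i%:R * p i.-1 x) * s ^+ (k - i)).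
  by apply: eq_bigr => i _; rewrite -(Dp i x); ring.
case: k => [|k]; first by rewrite big_ord1 /= !(mulr0, mul0r).
rewrite big_ord_recl /= !(mulr0, mul0r) add0r mulr_sumr.
apply: eq_bigr => i _; rewrite /bump add1n subSS /=.
have binE : ('C(k.+1, i.+1)%:R * i.+1%:R : V) = k.+1%:R * 'C(k, i)%:R.
  by rewrite -!natrM mulnC -mul_bin_diag.
transitivity ('C(k.+1, i.+1)%:R * i.+1%:R * h * p i x * s ^+ (k - i)); first ring.
by rewrite binE; ring.
Qed.

Lemma binom_trans_geometric s p u x :
  (forall i, p i x = u ^+ i) -> forall k, binom_trans s p k x = (s + u) ^+ k.
Proof.
move=> pu k; rewrite exprDn; apply: eq_bigr => i _.
by rewrite pu -mulr_natl; ring.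
Qed.

Lemma ffact_at0 h k : ffact h k 0 = 0 ^+ k.
Proof.
case: k => [|k]; first by rewrite /ffact big_ord0.
by rewrite /ffact big_ord_recl /= mul0r subrr mul0r expr0n.
Qed.

Lemma delta_appell_grid h q : delta_appell h q -> (forall k, q k 0 = 0 ^+ k) ->
  forall k n, q k (n%:R * h) = h ^+ k * (k`! * 'C(n, k))%:R.
Proof.
move=> Dq q0 k n; elim: n k => [|n IHn] k.
  by rewrite mul0r q0; case: k => [|k]; rewrite ?expr0n ?bin0n ?muln0 ?mulr0 ?mulr1.
have -> : q k (n.+1%:R * h) = q k (n%:R * h) + h * k%:R * q k.-1 (n%:R * h).
  by rewrite -(Dq k) addrC subrK mulrSr mulrDl mul1r.
case: k => [|k]; first by rewrite mulr0 mul0r addr0 IHn !bin0.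
by rewrite !IHn binS factS !natrM natrD exprS; ring.
Qed.

End DifferenceAppell.

Lemma sum_binom_widen (V : pzSemiRingType) k N (F : nat -> V) : (k < N)%N ->
  \sum_(i < N) 'C(k, i)%:R * F i = \sum_(i < k.+1) 'C(k, i)%:R * F i.
Proof.
move=> ltkN; rewrite [RHS](big_ord_widen N (fun i => 'C(k, i)%:R * F i) ltkN).
rewrite [RHS]big_mkcond /=.
by apply: eq_bigr => i _; case: ltnP => // /bin_small ->; rewrite mul0r.
Qed.

Lemma binom_partial_sum_le (F : numDomainType) (r : F) n K : 0 <= r ->
  \sum_(k < K) 'C(n, k)%:R * r ^+ k <= (1 + r) ^+ n.
Proof.
move=> r_ge0; rewrite addrC exprD1n.
under [X in _ <= X]eq_bigr => k _ do rewrite -mulr_natl.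
rewrite -(sum_binom_widen _ (ltn_addl K (ltnSn n))).
rewrite (big_ord_widen _ (fun k => 'C(n, k)%:R * r ^+ k) (leq_addr n.+1 K)).
rewrite [X in _ <= X](bigID (fun i : 'I_ _ => (i < K)%N)) /=.
by rewrite lerDl sumr_ge0 // => i _; rewrite mulr_ge0 ?exprn_ge0.
Qed.

Lemma norm_binom_sum_le (F : numDomainType) (x : F) n K :
  `|\sum_(k < K) 'C(n, k)%:R * x ^+ k| <= (1 + `|x|) ^+ n.
Proof.
apply: le_trans (ler_norm_sum _ _ _) _.
under eq_bigr => k _ do rewrite normrM normr_nat normrX.
exact: binom_partial_sum_le.
Qed.

Lemma forward_diff_dominated (F : numDomainType) (h : nat -> F) (c r a : F) :
  0 <= r -> (forall n, `|h n| <= `|c * r ^+ n|) ->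
  forall n, `|(h n.+1 - h n) * a| <= `|c * (r + 1) * a * r ^+ n|.
Proof.
move=> r_ge0 h_le n.
have r1_ge0 : 0 <= r + 1 by rewrite addr_ge0.
rewrite !normrM (ger0_norm r1_ge0) normrX (ger0_norm r_ge0).
apply: le_trans (ler_wpM2r (normr_ge0 a) (ler_normB _ _)) _.
have -> : `|c| * (r + 1) * `|a| * r ^+ n = (`|c| * r ^+ n.+1 + `|c| * r ^+ n) * `|a|.
  by rewrite exprS; ring.
rewrite ler_wpM2r //; apply: lerD; apply: le_trans (h_le _) _;
  by rewrite normrM normrX (ger0_norm r_ge0).
Qed.

Section SquaredModulus.
Variable R : realType.
Implicit Types x y : R[i].

Lemma cabs2E x : (cabs2 x)%:C = `|x| ^+ 2.
Proof. by case: x => a b; rewrite -add_Re2_Im2. Qed.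

Lemma cabs2_ge0 x : 0 <= cabs2 x.
Proof. by rewrite -ler0c cabs2E exprn_ge0. Qed.

Lemma cabs2_eq0 x : cabs2 x = 0 -> x = 0.
Proof.
move/(congr1 (fun r : R => r%:C)); rewrite cabs2E => /eqP.
by rewrite expf_eq0 normr_eq0 => /andP[_ /eqP].
Qed.

Lemma cabs2_real (r : R) : cabs2 r%:C = r ^+ 2.
Proof. by rewrite /= expr0n addr0. Qed.

Lemma cabs2M x y : cabs2 (x * y) = cabs2 x * cabs2 y.
Proof. by case: x y => a b [c d] /=; ring. Qed.

Lemma cabs2X x n : cabs2 (x ^+ n) = cabs2 x ^+ n.
Proof.
elim: n => [|n IHn]; first by rewrite /= expr0n expr1n addr0.
by rewrite !exprS cabs2M IHn.
Qed.

Lemma cabs2_le_norm x y : `|x| <= `|y| -> cabs2 x <= cabs2 y.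
Proof. by move=> le_xy; rewrite -lecR !cabs2E ler_pXn2r ?nnegrE. Qed.

Lemma cabs2B_le x y : cabs2 (x - y) <= 2 * (cabs2 x + cabs2 y).
Proof.
case: x y => a b [c d] /=.
have -> : 2 * (a ^+ 2 + b ^+ 2 + (c ^+ 2 + d ^+ 2))
  = (a - c) ^+ 2 + (b - d) ^+ 2 + ((a + c) ^+ 2 + (b + d) ^+ 2) by ring.
by rewrite lerDl addr_ge0 ?sqr_ge0.
Qed.

End SquaredModulus.

Section CharlierGrid.
Variables (R : realType) (alpha sigma : R).
Hypothesis alpha_gt0 : 0 < alpha.
Local Notation C := R[i].

Lemma alphaC_neq0 : alpha%:C != 0 :> C.
Proof. by rewrite fmorph_eq0 gt_eqF. Qed.

Lemma grid_pointE n : (alpha * n%:R)%:C = n%:R * alpha%:C :> C.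
Proof. by rewrite rmorphM rmorph_nat mulrC. Qed.

Lemma grid_pointS n : (alpha * n.+1%:R)%:C = (alpha * n%:R)%:C + alpha%:C :> C.
Proof. by rewrite -rmorphD mulrSr mulrDr mulr1. Qed.

Lemma cpoly_binom_trans k x :
  cpoly alpha sigma k x = binom_trans (- (sigma / alpha))%:C (ffact alpha%:C) k x.
Proof.
apply: eq_bigr => i _; rewrite mulrA; congr (_ * _ * _); apply: eq_bigr => j _.
by rewrite rmorphM rmorph_nat.
Qed.

Lemma cpoly_appell : delta_appell alpha%:C (cpoly alpha sigma).
Proof.
move=> k x; rewrite !cpoly_binom_trans.
exact/binom_trans_appell/ffact_appell.
Qed.

Lemma cpoly_at0 i : cpoly alpha sigma i 0 = (- (sigma / alpha))%:C ^+ i.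
Proof.
by rewrite cpoly_binom_trans (binom_trans_geometric _ (ffact_at0 _)) addr0.
Qed.

Lemma binom_trans_cpoly_grid k n :
  binom_trans (sigma / alpha)%:C (cpoly alpha sigma) k (alpha * n%:R)%:C
  = alpha%:C ^+ k * (k`! * 'C(n, k))%:R.
Proof.
rewrite grid_pointE; apply: delta_appell_grid => [|j].
  exact/binom_trans_appell/cpoly_appell.
by rewrite (binom_trans_geometric _ cpoly_at0) rmorphN subrr.
Qed.

Lemma dminus_polyfunE a n : dminus_polyfun alpha sigma a n
  = (polyfun alpha sigma a n.+1 - polyfun alpha sigma a n) / alpha%:C.
Proof.
rewrite /dminus_polyfun /polyfun -sumrB mulr_suml; apply: eq_bigr => i _.
rewrite grid_pointS -mulrBr cpoly_appell.
by field; exact: alphaC_neq0.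
Qed.

End CharlierGrid.

Section WeightedL2.
Variables (R : realType) (alpha sigma : R).
Hypotheses (alpha_gt0 : 0 < alpha) (sigma_gt0 : 0 < sigma).
Local Notation C := R[i].
Local Notation weight := (weight alpha sigma).
Local Notation wnorm2 := (wnorm2 alpha sigma).
Local Notation inL2 := (inL2 alpha sigma).
Implicit Types f g : fun_on_grid R.

Lemma spar_gt0 : 0 < spar alpha sigma.
Proof. by rewrite divr_gt0 ?exprn_gt0. Qed.

Lemma weight_gt0 n : 0 < weight n.
Proof. by rewrite divr_gt0 ?mulr_gt0 ?expR_gt0 ?exprn_gt0 ?spar_gt0 ?ltr0n ?fact_gt0. Qed.

Lemma wterm_ge0 f n : 0 <= weight n * cabs2 (f n).
Proof. by rewrite mulr_ge0 ?cabs2_ge0 ?ltW ?weight_gt0. Qed.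

Lemma wnorm2_ge_term f m : ((weight m * cabs2 (f m))%:E <= wnorm2 f)%E.
Proof.
apply: le_trans (nneseries_lim_ge m.+1 _) => [|n _ _]; last by rewrite lee_fin wterm_ge0.
by rewrite big_nat_recr //= leeDr // sume_ge0 // => n _; rewrite lee_fin wterm_ge0.
Qed.

Lemma wnorm2_le f g : (forall n, `|f n| <= `|g n|) -> (wnorm2 f <= wnorm2 g)%E.
Proof.
move=> fg; apply: lee_nneseries => [n _ _|n _]; first by rewrite lee_fin wterm_ge0.
rewrite lee_fin ler_wpM2l ?(ltW (weight_gt0 n)) //; exact/cabs2_le_norm/fg.
Qed.

Lemma inL2_le f g : (forall n, `|f n| <= `|g n|) -> inL2 g -> inL2 f.
Proof. by move=> fg; apply: le_lt_trans (wnorm2_le fg). Qed.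

Lemma wnorm2_geometric (c r : C) : wnorm2 (fun n => c * r ^+ n)
  = (expR (- spar alpha sigma) * cabs2 c * expR (spar alpha sigma * cabs2 r))%:E.
Proof.
have cr0 : 0 <= spar alpha sigma * cabs2 r by rewrite mulr_ge0 ?cabs2_ge0 ?ltW ?spar_gt0.
have termE n : weight n * cabs2 (c * r ^+ n)
    = expR (- spar alpha sigma) * cabs2 c * exp_coeff (spar alpha sigma * cabs2 r) n.
  by rewrite cabs2M cabs2X /weight /exp_coeff /= [in RHS]exprMn; ring.
rewrite /wnorm2 EFinM.
under eq_eseriesr => n _ do rewrite termE EFinM.
rewrite nneseriesZl => [|n _]; last by rewrite lee_fin exp_coeff_ge0.
congr (_ * _)%E; rewrite /expR -EFin_lim; last exact: is_cvg_series_exp_coeff.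
by apply/congr_lim/funext => N /=; rewrite /series /= sumEFin.
Qed.

Lemma inL2_geometric (c r : C) : inL2 (fun n => c * r ^+ n).
Proof. by rewrite /inL2 wnorm2_geometric ltry. Qed.

Lemma wnorm2_cvg0_dominated (f : nat -> fun_on_grid R) g :
  (forall K n, `|f K n| <= `|g n|) -> inL2 g ->
  (forall K n, (n < K)%N -> f K n = 0) ->
  wnorm2 (f K) @[K --> \oo] --> 0%E.
Proof.
move=> fg g2 f0; apply: (squeeze_cvge _ (cvg_cst 0%E)
  (nneseries_tail_cvg g2 (fun n _ => wterm_ge0 g n))).
apply: nearW => K; rewrite /wnorm2 nneseries_ge0 => [|n _ _]; last first.
  by rewrite lee_fin wterm_ge0.
rewrite (nneseries_split 0 K) => [|n _]; last by rewrite lee_fin wterm_ge0.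
rewrite add0n big_mkord big1 ?add0e => [|i _]; last by rewrite f0 //= expr0n addr0 mulr0.
apply: lee_nneseries => [n _ _|n _]; first by rewrite lee_fin wterm_ge0.
by rewrite lee_fin ler_wpM2l ?(ltW (weight_gt0 n)) //; exact/cabs2_le_norm/fg.
Qed.

Lemma wnorm2_cvg0_pointwise (u : nat -> fun_on_grid R) m :
  wnorm2 (u k) @[k --> \oo] --> 0%E -> cabs2 (u k m) @[k --> \oo] --> 0.
Proof.
move=> u0; have wu0 : (weight m * cabs2 (u k m))%:E @[k --> \oo] --> 0%E.
  apply: (squeeze_cvge _ (cvg_cst 0%E) u0); apply: nearW => k.
  by rewrite lee_fin wterm_ge0 wnorm2_ge_term.
have -> : (fun k => cabs2 (u k m))
    = (fun k => (weight m)^-1 * fine (weight m * cabs2 (u k m))%:E).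
  by apply/funext => k /=; rewrite mulKf // gt_eqF // weight_gt0.
rewrite -(mulr0 (weight m)^-1); exact: cvgMl_tmp (fine_cvg wu0).
Qed.

Lemma in_graph_closure_diff f g : in_graph_closure alpha sigma f g ->
  forall n, g n = (f n.+1 - f n) / alpha%:C.
Proof.
move=> [_ [_ [a [fa ga]]]] n.
pose u k m := polyfun alpha sigma (a k) m - f m.
pose v k m := dminus_polyfun alpha sigma (a k) m - g m.
pose D := (f n.+1 - f n) / alpha%:C - g n.
(* [D] does not depend on [k], yet is bounded by terms tending to 0 as [k --> \oo]. *)
have D_le k : cabs2 D <= 2 * (cabs2 (v k n)
    + alpha^-2 * (2 * (cabs2 (u k n.+1) + cabs2 (u k n)))).
  have -> : D = v k n - (u k n.+1 - u k n) * (alpha^-1)%:C.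
    by rewrite /D /v /u dminus_polyfunE // fmorphV; field; exact: alphaC_neq0.
  apply: le_trans (cabs2B_le _ _) _; rewrite ler_pM2l // lerD2l.
  rewrite cabs2M cabs2_real exprVn mulrC.
  by apply: ler_wpM2l; [rewrite invr_ge0 exprn_ge0 // ltW | exact: cabs2B_le].
have bound0 : 2 * (cabs2 (v k n) + alpha^-2 * (2 * (cabs2 (u k n.+1) + cabs2 (u k n))))
    @[k --> \oo] --> (2 * (0 + alpha^-2 * (2 * (0 + 0))) : R).
  apply: cvgMl_tmp; apply: cvgD; first exact: wnorm2_cvg0_pointwise.
  by do 2 apply: cvgMl_tmp; apply: cvgD; exact: wnorm2_cvg0_pointwise.
rewrite !(addr0, mulr0) in bound0.
have D0 : D = 0.
  apply: cabs2_eq0; apply/eqP; rewrite eq_le cabs2_ge0 andbT.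
  by apply: (ler_cvg_to (cvg_cst _) bound0); apply: nearW => k; exact: D_le.
by apply/esym/eqP; rewrite -subr_eq0 -/D D0.
Qed.

Lemma dminus_is_closable : dminus_closable alpha sigma.
Proof.
move=> f g1 g2 fg1 fg2; apply/funext => n.
by rewrite (in_graph_closure_diff fg1) (in_graph_closure_diff fg2).
Qed.

End WeightedL2.

Section CoherentState.
Variables (R : realType) (alpha sigma : R).
Hypotheses (alpha_gt0 : 0 < alpha) (sigma_gt0 : 0 < sigma).
Variable z : R[i].
Local Notation C := R[i].
Local Notation E := (coherent alpha sigma z).

Let t : C := z / sigma%:C.
Let w : C := alpha%:C * t.
Let c0 : C := cexp (- z / alpha%:C).
Let rho : C := 1 + `|w|.

Let approx K n : C := c0 * \sum_(k < K.+1) 'C(n, k)%:R * w ^+ k.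

(* The coefficients of [approx K] in the basis (c_i), by [binom_trans_cpoly_grid]. *)
Let approx_coef K : seq C := mkseq (fun i => \sum_(k < K.+1)
  c0 * t ^+ k / k`!%:R * 'C(k, i)%:R * (sigma / alpha)%:C ^+ (k - i)) K.+1.

Let coherentE n : E n = approx n n.
Proof.
rewrite /coherent /approx mulrC /w /t mulrA addrC exprD1n; congr (_ * _).
by apply: eq_bigr => k _; rewrite mulr_natl.
Qed.

Let approx_coherent K n : (n <= K)%N -> approx K n = E n.
Proof. by move=> le_nK; rewrite coherentE /approx sum_binom_widen. Qed.

Let polyfun_approx K n : polyfun alpha sigma (approx_coef K) n = approx K n.
Proof.
rewrite /polyfun size_mkseq.
under eq_bigr => i _ do rewrite nth_mkseq // mulr_suml.
rewrite exchange_big /approx mulr_sumr; apply: eq_bigr => k _ /=.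
transitivity (c0 * t ^+ k / k`!%:R
  * binom_trans (sigma / alpha)%:C (cpoly alpha sigma) k (alpha * n%:R)%:C).
  rewrite /binom_trans -(sum_binom_widen (fun i => cpoly alpha sigma i (alpha * n%:R)%:C
    * (sigma / alpha)%:C ^+ (k - i)) (ltn_ord k)) mulr_sumr.
  by apply: eq_bigr => i _; ring.
rewrite binom_trans_cpoly_grid // [(alpha%:C * t) ^+ k]exprMn natrM.
by field; rewrite pnatr_eq0 -lt0n fact_gt0.
Qed.

Let rho_ge0 : 0 <= rho.
Proof. by rewrite addr_ge0. Qed.

Let approx_dom K n : `|approx K n| <= `|c0 * rho ^+ n|.
Proof.
by rewrite /approx !normrM normrX (ger0_norm rho_ge0) ler_wpM2l // norm_binom_sum_le.
Qed.

Let error_dom K n : `|approx K n - E n| <= `|2 * c0 * rho ^+ n|.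
Proof.
have -> : `|2 * c0 * rho ^+ n| = `|c0 * rho ^+ n| + `|c0 * rho ^+ n|.
  by rewrite -mulrA normrM normr_nat mulr_natl mulr2n.
by apply: le_trans (ler_normB _ _) _; rewrite coherentE lerD ?approx_dom.
Qed.

Let coherent_diff n : (E n.+1 - E n) / alpha%:C = t * E n.
Proof.
rewrite /coherent /t exprS; field.
by rewrite !fmorph_eq0 !gt_eqF.
Qed.

Let dminus_approx K n : dminus_polyfun alpha sigma (approx_coef K) n - t * E n
  = ((approx K n.+1 - E n.+1) - (approx K n - E n)) / alpha%:C.
Proof. by rewrite dminus_polyfunE // !polyfun_approx -coherent_diff; ring. Qed.

Lemma coherent_in_graph_closure :
  in_graph_closure alpha sigma E (fun n => z / sigma%:C * E n).
Proof.
have E_dom n : `|E n| <= `|c0 * rho ^+ n| by rewrite coherentE approx_dom.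
have tE_dom n : `|t * E n| <= `|t * c0 * rho ^+ n|.
  rewrite -[t * c0 * _]mulrA (normrM t) (normrM t).
  by apply: ler_wpM2l; [exact: normr_ge0 | exact: E_dom].
split; first by apply: (inL2_le alpha_gt0 sigma_gt0 E_dom); exact: inL2_geometric.
split; first by apply: (inL2_le alpha_gt0 sigma_gt0 tE_dom); exact: inL2_geometric.
exists approx_coef; split.
  apply: (wnorm2_cvg0_dominated alpha_gt0 sigma_gt0 _
    (inL2_geometric alpha_gt0 sigma_gt0 (2 * c0) rho)) => [K n|K n lt_nK].
    by rewrite polyfun_approx error_dom.
  by rewrite polyfun_approx approx_coherent ?subrr // ltnW.
apply: (wnorm2_cvg0_dominated alpha_gt0 sigma_gt0 _ (inL2_geometric alpha_gt0 sigma_gt0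
  (2 * c0 * (rho + 1) * alpha%:C^-1) rho)) => [K n|K n lt_nK].
  by rewrite dminus_approx; exact: forward_diff_dominated rho_ge0 (error_dom K) n.
by rewrite dminus_approx !approx_coherent ?subrr ?mul0r // ltnW.
Qed.

End CoherentState.

Theorem proposition4p7 (R : realType) (alpha sigma : R) :
  0 < alpha -> 0 < sigma ->
  dminus_closable alpha sigma /\
  (forall z : R[i], exists g : nat -> R[i],
      in_graph_closure alpha sigma (coherent alpha sigma z) g /\
      (forall n, sigma%:C * g n = z * coherent alpha sigma z n)).
Proof.
move=> alpha_gt0 sigma_gt0; split; first exact: dminus_is_closable.
move=> z; exists (fun n => z / sigma%:C * coherent alpha sigma z n); split.
  exact: coherent_in_graph_closure.
by move=> n; field; rewrite fmorph_eq0 gt_eqF.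
Qed.
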